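(* Let $(U(s,t))_{s\le t,\ s,t\in\mathbb{R}}$ be the evolution system of a Markov process on $\mathbb{R}^d$, with right generators $A_r^+$ and left generators $A_s^-$. Fix $s\in\mathbb{R}$ and let $f\in\mathcal{D}(A_s^+)$ be such that for some $\delta>0$ we have $f\in\bigcap_{r\in(s-\delta,s]}\mathcal{D}(A_r^+)$. Assume \[\lim_{h\downarrow 0}\ \sup_{r\in(s-\delta,s]}\left\|\frac{U(r,r+h)f-f}{h}-A_r^+f\right\|_\infty=0\] and \[\lim_{h\downarrow 0}\|A_{s-h}^+f-A_s^+f\|_\infty=0.\] Then $f\in\mathcal{D}(A_s^-)$ and $A_s^+f=A_s^-f$.
   Context: Let $(X_t)_{t\in\mathbb{R}}$ be an $\mathbb{R}^d$-valued (time-inhomogeneous) Markov process. Its evolution system is $U(s,t)f(x):=\mathbb{E}(f(X_t)\mid X_s=x)$ for $s\le t$, $f$ bounded Borel; it satisfies $U(s,s)=\mathrm{id}$, $U(s,t)=U(s,r)U(r,t)$ for $s\le r\le t$, positivity and $U(s,t)1=1$. $\|\cdot\|_\infty$ is the uniform norm and $C_\infty(\mathbb{R}^d)$ the continuous functions vanishing at infinity. The right generator at time $s$ is $A_s^+f:=\lim_{h\downarrow0}\frac{U(s,s+h)f-f}{h}$, defined on $\mathcal{D}(A_s^+)$, the set of $f\in C_\infty(\mathbb{R}^d)$ for which this limit exists in $\|\cdot\|_\infty$. The left generator is $A_s^-f:=\lim_{h\downarrow0}\frac{U(s-h,s)f-f}{h}$ on the set $\mathcal{D}(A_s^-)$ of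 $f\in C_\infty(\mathbb{R}^d)$ where this limit exists in $\|\cdot\|_\infty$. *)

From Stdlib Require Fin.
From Stdlib Require Import Reals.
Open Scope R_scope.

Definition Rd (d : nat) := Fin.t d -> R.

Definition fn (d : nat) := Rd d -> R.

Definition bounded {d : nat} (f : fn d) : Prop :=
  exists M : R, forall x, Rabs (f x) <= M.

(* Continuity on R^d (coordinatewise max-norm topology = usual topology). *)
Definition continuous_Rd {d : nat} (f : fn d) : Prop :=
  forall x (eps : R), 0 < eps -> exists delta : R, 0 < delta /\
    forall y, (forall i, Rabs (y i - x i) < delta) -> Rabs (f y - f x) < eps.

Definition vanish_at_infty {d : nat} (f : fn d) : Prop :=
  forall eps : R, 0 < eps -> exists M : R,
    forall x, (exists i, M < Rabs (x i)) -> Rabs (f x) < eps.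

Definition C_infty {d : nat} (f : fn d) : Prop :=
  continuous_Rd f /\ vanish_at_infty f.

Definition sup_norm_le {d : nat} (g : fn d) (c : R) : Prop :=
  forall x, Rabs (g x) <= c.

(* Abstract evolution system U(s,t), s <= t, acting on bounded functions,
   with the properties listed in the context (identity, evolution property,
   positivity, conservativeness) plus linearity. *)
Definition evolution_system {d : nat} (U : R -> R -> fn d -> fn d) : Prop :=
  (forall s t f, s <= t -> bounded f -> bounded (U s t f)) /\
  (forall s f, bounded f -> forall x, U s s f x = f x) /\
  (forall s r t f, s <= r -> r <= t -> bounded f ->
      forall x, U s t f x = U s r (U r t f) x) /\
  (forall s t f, s <= t -> bounded f -> (forall x, 0 <= f x) ->
      forall x, 0 <= U s t f x) /\
  (forall s t, s <= t -> forall x, U s t (fun _ => 1) x = 1) /\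
  (forall s t (a : R) f g, s <= t -> bounded f -> bounded g ->
      forall x, U s t (fun y => a * f y + g y) x = a * U s t f x + U s t g x).

(* f ∈ D(A_s^+) and A_s^+ f = g :
   f ∈ C_infty and (U(s,s+h)f - f)/h -> g in sup norm as h ↓ 0. *)
Definition is_right_gen {d : nat} (U : R -> R -> fn d -> fn d)
    (s : R) (f g : fn d) : Prop :=
  C_infty f /\
  forall eps : R, 0 < eps -> exists eta : R, 0 < eta /\
    forall h, 0 < h < eta ->
      sup_norm_le (fun x => (U s (s + h) f x - f x) / h - g x) eps.

(* f ∈ D(A_s^-) and A_s^- f = g :
   f ∈ C_infty and (U(s-h,s)f - f)/h -> g in sup norm as h ↓ 0. *)
Definition is_left_gen {d : nat} (U : R -> R -> fn d -> fn d)
    (s : R) (f g : fn d) : Prop :=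
  C_infty f /\
  forall eps : R, 0 < eps -> exists eta : R, 0 < eta /\
    forall h, 0 < h < eta ->
      sup_norm_le (fun x => (U (s - h) s f x - f x) / h - g x) eps.

From Stdlib Require Import Reals Lra.
Open Scope R_scope.

(* The left difference quotient of f at s with step h,
     (U(s-h,s)f - f)/h,
   is exactly the right difference quotient at the moving base point
   r = s - h with the same step.  Write it as
     [right quotient at s-h  -  A_{s-h}^+ f]  +  [A_{s-h}^+ f - A_s^+ f]  +  A_s^+ f.
   The first bracket tends to 0 because the right quotients converge
   uniformly in r over (s - delta, s], so they may be evaluated along the
   diagonal r = s - h; the second bracket tends to 0 by the left continuity of
   r |-> A_r^+ f at s.  Hence the left quotients converge to A_s^+ f.
   The file first names uniform convergence as h tends to 0 from above, proves
   the triangle inequality for the sup-norm bound and the resulting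
   "F - G -> 0 and G -> g imply F -> g" principle, then the diagonal lemma, and
   finally assembles the theorem. *)

Definition sup_conv {d : nat} (F : R -> fn d) (g : fn d) : Prop :=
  forall eps : R, 0 < eps -> exists eta : R, 0 < eta /\
    forall h, 0 < h < eta -> sup_norm_le (fun x => F h x - g x) eps.

Lemma sup_norm_le_add {d : nat} (g k : fn d) (a b : R) :
  sup_norm_le g a -> sup_norm_le k b ->
  sup_norm_le (fun x => g x + k x) (a + b).
Proof.
  intros Hg Hk x.
  eapply Rle_trans; [apply Rabs_triang |].
  apply Rplus_le_compat; [apply Hg | apply Hk].
Qed.

Lemma sup_conv_of_diff {d : nat} (F G : R -> fn d) (g : fn d) :
  sup_conv (fun h x => F h x - G h x) (fun _ => 0) -> sup_conv G g ->
  sup_conv F g.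
Proof.
  intros HFG HG eps Heps.
  destruct (HFG (eps / 2)) as [e1 [He1 H1]]; [lra |].
  destruct (HG (eps / 2)) as [e2 [He2 H2]]; [lra |].
  exists (Rmin e1 e2); split; [now apply Rmin_pos |].
  intros h Hh x.
  pose proof (Rmin_l e1 e2); pose proof (Rmin_r e1 e2).
  assert (Hsum := sup_norm_le_add _ _ _ _ (H1 h ltac:(lra)) (H2 h ltac:(lra)) x).
  simpl in Hsum.
  replace (eps / 2 + eps / 2) with eps in Hsum by field.
  replace (F h x - g x) with (F h x - G h x - 0 + (G h x - g x)) by ring.
  exact Hsum.
Qed.

Lemma uniform_right_quotient_diagonal {d : nat} (U : R -> R -> fn d -> fn d)
    (s : R) (f : fn d) (Ap : R -> fn d) (delta : R) (Hdelta : 0 < delta) :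
  (forall eps : R, 0 < eps -> exists eta : R, 0 < eta /\
     forall h, 0 < h < eta -> forall r, s - delta < r <= s ->
       sup_norm_le (fun x => (U r (r + h) f x - f x) / h - Ap r x) eps) ->
  sup_conv (fun h x => (U (s - h) s f x - f x) / h - Ap (s - h) x) (fun _ => 0).
Proof.
  intros Hunif eps Heps.
  destruct (Hunif eps Heps) as [eta [Heta Hbound]].
  exists (Rmin eta delta); split; [now apply Rmin_pos |].
  intros h Hh x.
  pose proof (Rmin_l eta delta); pose proof (Rmin_r eta delta).
  assert (Hdiag := Hbound h ltac:(lra) (s - h) ltac:(lra) x).
  replace (s - h + h) with s in Hdiag by ring.
  rewrite Rminus_0_r.
  exact Hdiag.
Qed.

Theorem lemma2p2 (d : nat) (U : R -> R -> fn d -> fn d)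
  (HU : evolution_system U)
  (s : R) (f : fn d) (Ap : R -> fn d) (delta : R) (Hdelta : 0 < delta)
  (Hdom : forall r, s - delta < r <= s -> is_right_gen U r f (Ap r))
  (Hunif : forall eps : R, 0 < eps -> exists eta : R, 0 < eta /\
     forall h, 0 < h < eta -> forall r, s - delta < r <= s ->
       sup_norm_le (fun x => (U r (r + h) f x - f x) / h - Ap r x) eps)
  (Hcont : forall eps : R, 0 < eps -> exists eta : R, 0 < eta /\
     forall h, 0 < h < eta -> sup_norm_le (fun x => Ap (s - h) x - Ap s x) eps) :
  is_left_gen U s f (Ap s).
Proof.
  split.
  -
    destruct (Hdom s) as [Hf _]; [lra | exact Hf].
  -
    apply (sup_conv_of_diff _ (fun h => Ap (s - h))).
    + exact (uniform_right_quotient_diagonal U s f Ap delta Hdelta Hunif).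
    + exact Hcont.
Qed.
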